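(* Let $X$ be a minimal dendric shift over $\mathcal{A}$ which is planar for $(\le^L,\le^R)$. (1) Every long enough left special factor $w$ of $X$ satisfies $E^L_X(w)=\{a,b\}$ where $a,b$ are consecutive for $\le^L$; moreover, for any two $\le^L$-consecutive letters $a,b$ and every $n\in\mathbb{N}$, there is a unique left special factor $w$ of length $n$ with $\{a,b\}\subseteq E^L_X(w)$. (2) Every long enough right special factor $w$ satisfies $E^R_X(w)=\{a,b\}$ where $a,b$ are consecutive for $\le^R$; moreover, for any two $\le^R$-consecutive letters $a,b$ and every $n\in\mathbb{N}$, there is a unique right special factor $w$ of length $n$ with $\{a,b\}\subseteq E^R_X(w)$.
   Context: A shift space over a finite alphabet $\mathcal{A}$ is a nonempty closed shift-invariant $X\subseteq\mathcal{A}^{\mathbb{Z}}$ with all letters in its language $\mathcal{L}(X)$; minimal if no nonempty proper closed shift-invariant subset. For $w\in\mathcal{L}(X)$: $E^L_X(w)=\{a:aw\in\mathcal{L}(X)\}$, $E^R_X(w)=\{b:wb\in\mathcal{L}(X)\}$, $E_X(w)=\{(a,b):awb\in\mathcal{L}(X)\}$; $w$ left (right) special if $|E^L_X(w)|\ge2$ ($|E^R_X(w)|\ge2$). $\mathcal{E}_X(w)$ is the bipartite graph on disjoint copies of $E^L_X(w),E^R_X(w)$ with edges $E_X(w)$; $X$ is dendric if each $\mathcal{E}_X(w)$ is a tree. For total orders $\le^L,\le^R$ on $\mathcal{A}$, $w$ is planar for $(\le^L,\le^R)$ if for all $(a_1,b_1),(a_2,b_2)\in E_X(w)$, $a_1<^La_2$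 implies $b_1\le^Rb_2$; $X$ is planar for $(\le^L,\le^R)$ if every word of $\mathcal{L}(X)$ is. *)

From mathcomp Require Import all_boot all_order all_algebra.
Set Implicit Arguments. Unset Strict Implicit. Unset Printing Implicit Defensive.
Import Order.TTheory GRing.Theory Num.Theory.
Local Open Scope ring_scope.

Section Shift.
Variable A : finType.

Definition config := int -> A.

Definition shift (x : config) : config := fun i => x (i + 1).

(* closed in the product topology of A^Z (A discrete): the basic
   neighbourhoods of x are the central cylinders [x_{-n..n}] *)
Definition closed_set (X : config -> Prop) : Prop :=
  forall x : config,
    (forall n : nat, exists y, X y /\ forall i : int, -(n%:Z) <= i <= n%:Z -> y i = x i) ->
    X x.

Definition shift_invariant (X : config -> Prop) : Prop :=
  forall x : config, X x <-> X (shift x).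

Definition window (x : config) (i : int) (m : nat) : seq A :=
  [seq x (i + k%:Z) | k <- iota 0 m].

Definition lang (X : config -> Prop) (w : seq A) : Prop :=
  exists x, X x /\ exists i : int, window x i (size w) = w.

Definition shift_space (X : config -> Prop) : Prop :=
  [/\ exists x, X x, closed_set X, shift_invariant X
    & forall a : A, lang X [:: a]].

Definition minimal_shift (X : config -> Prop) : Prop :=
  shift_space X /\
  forall Y : config -> Prop,
    (exists y, Y y) -> closed_set Y -> shift_invariant Y ->
    (forall y, Y y -> X y) -> forall x, X x -> Y x.

Definition EL (X : config -> Prop) (w : seq A) (a : A) : Prop := lang X (a :: w).
Definition ER (X : config -> Prop) (w : seq A) (b : A) : Prop := lang X (rcons w b).
Definition E2 (X : config -> Prop) (w : seq A) (a b : A) : Prop :=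
  lang X (a :: rcons w b).

Definition left_special (X : config -> Prop) (w : seq A) : Prop :=
  exists a b, a <> b /\ EL X w a /\ EL X w b.
Definition right_special (X : config -> Prop) (w : seq A) : Prop :=
  exists a b, a <> b /\ ER X w a /\ ER X w b.

(* the extension graph of w: vertices inl a (a in E^L(w)) and
   inr b (b in E^R(w)), edges {inl a, inr b} for (a,b) in E(w) *)
Definition ext_vertex (X : config -> Prop) (w : seq A) (v : A + A) : Prop :=
  match v with inl a => EL X w a | inr b => ER X w b end.

Definition ext_adj (X : config -> Prop) (w : seq A) (u v : A + A) : Prop :=
  match u, v with
  | inl a, inr b => E2 X w a b
  | inr b, inl a => E2 X w a b
  | _, _ => False
  end.

Definition g_connected (T : Type) (V : T -> Prop) (adj : T -> T -> Prop) : Prop :=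
  forall u v, V u -> V v ->
    exists p : seq T, last u p = v /\
      forall i : nat, (i < size p)%N -> adj (nth u (u :: p) i) (nth u p i).

Definition g_has_cycle (T : eqType) (adj : T -> T -> Prop) : Prop :=
  exists (v : T) (c : seq T),
    let s := v :: c in
    [/\ (3 <= size s)%N, uniq s &
      forall i : nat, (i < size s)%N -> adj (nth v s i) (nth v s (i.+1 %% size s))].

Definition g_tree (T : eqType) (V : T -> Prop) (adj : T -> T -> Prop) : Prop :=
  (exists v, V v) /\ g_connected V adj /\ ~ g_has_cycle adj.

Definition dendric (X : config -> Prop) : Prop :=
  forall w, lang X w -> g_tree (ext_vertex X w) (ext_adj X w).

Definition total_order (le : rel A) : Prop :=
  [/\ reflexive le, antisymmetric le, transitive le & total le].

Definition strict (le : rel A) (a b : A) : bool := le a b && (a != b).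

Definition consecutive (le : rel A) (a b : A) : Prop :=
  a <> b /\
  forall c, ~ (strict le a c && strict le c b) /\ ~ (strict le b c && strict le c a).

Definition planar_word (X : config -> Prop) (leL leR : rel A) (w : seq A) : Prop :=
  forall a1 b1 a2 b2, E2 X w a1 b1 -> E2 X w a2 b2 ->
    strict leL a1 a2 -> leR b1 b2.

Definition planar (X : config -> Prop) (leL leR : rel A) : Prop :=
  forall w, lang X w -> planar_word X leL leR w.

End Shift.

(* Planarity makes every extension graph non-crossing: E^L(w) is an interval
   for <=^L, and two <=^L-neighbours of E^L(w) share a right extension, since
   a path between them in the tree must cross from below to above.  Hence,
   for consecutive letters a < b, the words having both a and b as left
   extensions extend in exactly one way to the right (a second way would
   close a 4-cycle), so they are the prefixes of a single infinite word u.
   If arbitrarily long prefixes of u also had a third left extension c > b,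
   every right extension of b u_0..u_(n-1) would be squeezed between those of
   a and c, i.e. every occurrence of b in X would be followed by u.  By
   minimality b recurs to the right, so u is periodic, and a later
   occurrence of a u_0..u_(p-1) inside this periodic tail forces a = b.  So
   long left special words have exactly two, consecutive, left extensions;
   the right-special statements are the left-special ones for the mirror
   image of X. *)
From mathcomp Require Import all_boot all_order all_algebra zify.
From Stdlib Require Import Classical IndefiniteDescription FunctionalExtensionality.
Set Implicit Arguments. Unset Strict Implicit. Unset Printing Implicit Defensive.
Import Order.TTheory GRing.Theory Num.Theory.

Section Windows.
Local Open Scope ring_scope.
Variable A : finType.
Implicit Types (X : config A -> Prop) (y : config A) (w u v : seq A).

Lemma size_window y i m : size (window y i m) = m.
Proof. by rewrite /window size_map size_iota. Qed.

Lemma window_cat y i m n :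
  window y i (m + n) = window y i m ++ window y (i + m%:Z) n.
Proof.
rewrite /window iotaD map_cat; congr (_ ++ _).
rewrite -[in iota m n](addn0 m) iotaDl -map_comp; apply: eq_map => k /=.
by rewrite PoszD addrA.
Qed.

Lemma window_rcons y i m : window y i m.+1 = rcons (window y i m) (y (i + m%:Z)).
Proof. by rewrite -addn1 window_cat cats1 /window /= addr0. Qed.

Lemma window_cons y i m : window y i m.+1 = y i :: window y (i + 1) m.
Proof. by rewrite -add1n window_cat /window /= addr0. Qed.

Lemma nth_window y i m k d : (k < m)%N -> nth d (window y i m) k = y (i + k%:Z).
Proof. by move=> km; rewrite /window (nth_map 0%N) ?size_iota // nth_iota. Qed.

Lemma eq_window y y' i i' m :
  (forall k, (k < m)%N -> y (i + k%:Z) = y' (i' + k%:Z)) ->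
  window y i m = window y' i' m.
Proof.
move=> eqyy'; apply: (@eq_from_nth _ (y i)); rewrite ?size_window // => k km.
by rewrite !nth_window // eqyy'.
Qed.

Lemma lang_window X y i m : X y -> lang X (window y i m).
Proof. by move=> Xy; exists y; split => //; exists i; rewrite size_window. Qed.

Lemma lang_cat X u v : lang X (u ++ v) -> lang X u /\ lang X v.
Proof.
case=> y [Xy [i]]; rewrite size_cat window_cat => /eqP.
rewrite eqseq_cat ?size_window // => /andP[/eqP <- /eqP <-].
by split; apply: lang_window.
Qed.

Lemma lang_rcons X u e : lang X (rcons u e) -> lang X u.
Proof. by rewrite -cats1 => /lang_cat []. Qed.

Lemma lang_cons X u e : lang X (e :: u) -> lang X u.
Proof. by rewrite -cat1s => /lang_cat []. Qed.

Lemma lang_extend_right X w : lang X w -> exists e, lang X (rcons w e).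
Proof.
case=> y [Xy [i wi]]; exists (y (i + (size w)%:Z)).
by have := lang_window i (size w).+1 Xy; rewrite window_rcons wi.
Qed.

Lemma EL_lang X w a : EL X w a -> lang X w.
Proof. exact: lang_cons. Qed.

Lemma EL_rcons X w e a : EL X (rcons w e) a -> EL X w a.
Proof. by rewrite /EL -rcons_cons => /lang_rcons. Qed.

Lemma EL_take X w n a : EL X w a -> EL X (take n w) a.
Proof. by rewrite /EL -{1}(cat_take_drop n w) -cat_cons => /lang_cat []. Qed.

Lemma E2_EL X w a b : E2 X w a b -> EL X w a.
Proof. by rewrite /E2 -rcons_cons => /lang_rcons. Qed.

Lemma E2_lang X w a b : E2 X w a b -> lang X w.
Proof. by move/E2_EL/EL_lang. Qed.

End Windows.

Section TotalOrder.
Variables (A : finType) (le : rel A).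
Hypothesis le_total_order : total_order le.

Lemma le_refl a : le a a. Proof. by case: le_total_order. Qed.

Lemma le_anti a b : le a b -> le b a -> a = b.
Proof. by case: le_total_order => _ anti _ _ ab ba; apply: anti; rewrite ab ba. Qed.

Lemma le_trans a b c : le a b -> le b c -> le a c.
Proof. by case: le_total_order => _ _ tr _ ab bc; apply: tr bc. Qed.

Lemma le_total a b : le a b \/ le b a.
Proof. by case: le_total_order => _ _ _ tot; apply/orP/tot. Qed.

Lemma strictP a b : strict le a b <-> le a b /\ a <> b.
Proof. by rewrite /strict; split => [/andP[-> /eqP]|[-> /eqP]]. Qed.

Lemma strict_le a b : strict le a b -> le a b.
Proof. by case/strictP. Qed.

Lemma strict_neq a b : strict le a b -> a <> b.
Proof. by case/strictP. Qed.

Lemma strict_or_eq a b : le a b -> strict le a b \/ a = b.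
Proof. by move=> ab; case: (classic (a = b)) => [|nab]; [right|left; apply/strictP]. Qed.

Lemma not_le_strict a b : ~ le a b -> strict le b a.
Proof.
move=> nab; apply/strictP; case: (le_total a b) => // ba; split => // eba.
by apply: nab; rewrite eba le_refl.
Qed.

Lemma strict_total a b : a <> b -> strict le a b \/ strict le b a.
Proof.
move=> nab; case: (classic (le a b)) => [ab|/not_le_strict]; last by right.
by left; apply/strictP.
Qed.

Lemma strict_le_trans a b c : strict le a b -> le b c -> strict le a c.
Proof.
move=> /strictP[ab nab] bc; apply/strictP; split; first exact: le_trans bc.
by move=> eac; subst c; apply: nab; apply: le_anti.
Qed.

Lemma le_strict_trans a b c : le a b -> strict le b c -> strict le a c.
Proof.
move=> ab /strictP[bc nbc]; apply/strictP; split; first exact: le_trans bc.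
by move=> eac; subst c; apply: nbc; apply: le_anti.
Qed.

Lemma strict_asym a b : strict le a b -> ~ strict le b a.
Proof. by move=> /strictP[ab nab] /strict_le ba; apply: nab; apply: le_anti. Qed.

Definition rank a : nat := #|[pred z | strict le z a]|.

Lemma rank_strict a b : strict le a b -> (rank a < rank b)%N.
Proof.
move=> ab; apply: proper_card; apply/properP; split.
  by apply/subsetP => z; rewrite !inE => za; apply: strict_le_trans za (strict_le ab).
by exists a; rewrite !inE //; apply/negP => /strict_neq.
Qed.

Lemma exists_le_min (P : A -> Prop) a : P a -> exists m, P m /\ forall x, P x -> le m x.
Proof.
elim: {a}(rank a) {-2}a (leqnn (rank a)) => [|n IH] a ra Pa.
  exists a; split => // x Px; apply: NNPP => /not_le_strict/rank_strict.
  by rewrite ltnNge (leq_trans ra).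
case: (classic (exists x, P x /\ strict le x a)) => [[x [Px /rank_strict xa]]|nx].
  by apply: (IH x) => //; rewrite -ltnS (leq_trans xa).
exists a; split => // x Px; apply: NNPP => /not_le_strict xa.
by apply: nx; exists x.
Qed.

End TotalOrder.

Lemma g_path_closed (T : Type) (S : T -> Prop) (adj : T -> T -> Prop) (u : T) (p : seq T) :
  (forall x x', S x -> adj x x' -> S x') -> S u ->
  (forall i : nat, (i < size p)%N -> adj (nth u (u :: p) i) (nth u p i)) -> S (last u p).
Proof.
move=> Sadj; elim: p u => [|x p IH] u //= Su adjp.
have Sx : S x by apply: (Sadj u) => //; exact: (adjp 0%N).
apply: IH => // i ip; have := adjp i.+1 ip => /=.
by rewrite !(set_nth_default u x) //= ltnW.
Qed.

Section DendricPlanar.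
Variables (A : finType) (X : config A -> Prop) (leL leR : rel A).
Hypotheses (totL : total_order leL) (totR : total_order leR).
Hypotheses (dendX : dendric X) (planX : planar X leL leR).
Hypothesis letters : forall a : A, lang X [:: a].

Lemma planarE w a1 b1 a2 b2 :
  E2 X w a1 b1 -> E2 X w a2 b2 -> strict leL a1 a2 -> leR b1 b2.
Proof. by move=> h1 h2; apply: (planX (E2_lang h1)). Qed.

Lemma planar_squeeze w a e e' b x :
  E2 X w e b -> E2 X w e' b -> E2 X w a x -> strict leL e a -> strict leL a e' ->
  E2 X w a b.
Proof.
by move=> eb e'b ax ea ae'; rewrite (le_anti totR (planarE eb ax ea) (planarE ax e'b ae')).
Qed.

Lemma E2_no_square w a a' b b' : a <> a' -> b <> b' ->
  E2 X w a b -> E2 X w a b' -> E2 X w a' b -> E2 X w a' b' -> False.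
Proof.
move=> naa' nbb' ab ab' a'b a'b'.
have [_ [_ []]] := dendX (E2_lang ab).
exists (inl a), [:: inr b; inl a'; inr b']; split => //; last by case=> [|[|[|[|i]]]].
have /eqP naa'S : (inl a <> inl a' :> A + A) by case.
have /eqP nbb'S : (inr b <> inr b' :> A + A) by case.
by rewrite /= !inE !negb_or /= naa'S nbb'S.
Qed.

(* Follow a path from [a] to [a'] in the (connected) extension graph: as long
   as no right extension is shared, planarity keeps all left vertices on it
   below [a]. *)
Lemma EL_neighbours_share_ER w a a' : strict leL a a' -> EL X w a -> EL X w a' ->
  (forall d, EL X w d -> strict leL a d -> strict leL d a' -> False) ->
  exists b, E2 X w a b /\ E2 X w a' b.
Proof.
move=> aa' wa wa' between; apply: NNPP => noshare.
have [_ [conn _]] := dendX (EL_lang wa).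
have [x ax] := lang_extend_right wa.
have [y a'y] := lang_extend_right wa'.
pose S (v : A + A) : Prop := match v with
  | inl e => leL e a | inr b => exists e, leL e a /\ E2 X w e b end.
have [p [lastp adjp]] := conn (inl a) (inl a') wa wa'.
have /(strict_asym totL aa') [] : strict leL a' a.
  apply/strictP; split; last by move/esym/(strict_neq aa').
  have : S (last (inl a) p); last by rewrite lastp.
  apply: (g_path_closed (S := S)) adjp; last exact: le_refl.
  move=> [e|b] [e'|b'] //=; first by move=> ea eb'; exists e.
  move=> [e0 [e0a e0b]] e'b; apply: NNPP => /(not_le_strict totL) ae'.
  have a'e' : leL a' e'.
    apply: NNPP => /(not_le_strict totL) e'a'.
    exact: between e' (E2_EL e'b) ae' e'a'.
  apply: noshare; exists b; split.
    have [e0a'|<-//] := strict_or_eq e0a.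
    exact: planar_squeeze e0b e'b ax e0a' ae'.
  have [a'e''|->//] := strict_or_eq a'e'.
  exact: planar_squeeze e0b e'b a'y (le_strict_trans totL e0a aa') a'e''.
Qed.

Lemma EL_interval w c c' d : lang X w -> EL X w c -> EL X w c' ->
  strict leL c d -> strict leL d c' -> EL X w d.
Proof.
elim/last_ind: w => [|v e IH] vw vc vc' cd dc'; first exact: letters.
have [y dy] := lang_extend_right (IH (lang_rcons vw) (EL_rcons vc) (EL_rcons vc') cd dc').
by rewrite /EL -rcons_cons (le_anti totR (planarE vc dy cd) (planarE dy vc' dc')).
Qed.

Definition joint_EL a b n w := size w = n /\ EL X w a /\ EL X w b.

Lemma joint_EL_rcons a b n w e : joint_EL a b n.+1 (rcons w e) -> joint_EL a b n w.
Proof.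
by rewrite /joint_EL size_rcons => -[[->] [/EL_rcons wa /EL_rcons wb]].
Qed.

Lemma joint_EL_unique a b : strict leL a b -> (forall c, ~ (strict leL a c && strict leL c b)) ->
  forall n, exists w, joint_EL a b n w /\ forall w', joint_EL a b n w' -> w' = w.
Proof.
move=> ab between; elim=> [|n [w [[wn [wa wb]] wuniq]]].
  by exists [::]; split=> [|w' [/size0nil]//]; split; last by split; apply: letters.
have [x [ax bx]] := EL_neighbours_share_ER ab wa wb
  (fun d _ ad db => between d (introT andP (conj ad db))).
exists (rcons w x); split; first by split; [rewrite size_rcons wn|split].
case/lastP => [[]//|v e] ve; have vw := wuniq v (joint_EL_rcons ve); subst v.
case: ve => _ [ae be]; congr rcons; apply: NNPP => nex.
exact: (E2_no_square (strict_neq ab) nex ae ax be bx).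
Qed.

Lemma joint_ELC a b n w : joint_EL a b n w -> joint_EL b a n w.
Proof. by case=> wn [wa wb]. Qed.

Lemma consecutive_joint_EL_unique a b : consecutive leL a b ->
  forall n, exists w, joint_EL a b n w /\ forall w', joint_EL a b n w' -> w' = w.
Proof.
move=> [nab between] n; have [ab|ba] := strict_total totL nab.
  by apply: joint_EL_unique => // c; case: (between c).
have [w [/joint_ELC abw wuniq]] := joint_EL_unique ba (fun c => proj2 (between c)) n.
by exists w; split=> // w' /joint_ELC; apply: wuniq.
Qed.

Lemma consecutive_joint_EL_word a b : consecutive leL a b ->
  exists u : nat -> A, forall n, joint_EL a b n (mkseq u n) /\
    forall w, joint_EL a b n w -> w = mkseq u n.
Proof.
move=> ab; pose U n := proj1_sig (constructive_indefinite_description _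
  (consecutive_joint_EL_unique ab n)).
have [Uab Uuniq] : (forall n, joint_EL a b n (U n)) /\ forall n w, joint_EL a b n w -> w = U n.
  by split=> n; case: (proj2_sig (constructive_indefinite_description _
    (consecutive_joint_EL_unique ab n))).
exists (fun n => nth a (U n.+1) n).
suff UE : forall n, mkseq (fun n => nth a (U n.+1) n) n = U n.
  by move=> n; rewrite UE; split; [apply: Uab | apply: Uuniq].
elim=> [|n IH]; first by case: (Uab 0%N) => /size0nil.
rewrite mkseqS IH; have := Uab n.+1.
case/lastP: (U n.+1) => [[]//|v e] ve.
by rewrite -(Uuniq n v (joint_EL_rcons ve)) nth_rcons; case: (joint_EL_rcons ve) => -> _; rewrite ltnn eqxx.
Qed.

End DendricPlanar.

Lemma finite_uniform_bound (T : finType) (P : T -> Prop) (Q : T -> nat -> Prop) :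
  (forall t, P t -> exists N, forall n, (N <= n)%N -> Q t n) ->
  exists N, forall t, P t -> forall n, (N <= n)%N -> Q t n.
Proof.
move=> bound.
have bound' t : exists N, P t -> forall n, (N <= n)%N -> Q t n.
  by case: (classic (P t)) => [/bound [N] | nPt]; [exists N | exists 0%N].
pose N t := proj1_sig (constructive_indefinite_description _ (bound' t)).
exists (\max_t N t) => t Pt n Nn.
apply: (proj2_sig (constructive_indefinite_description _ (bound' t))) => //.
exact: leq_trans (leq_bigmax t) Nn.
Qed.

Definition infinitely (P : nat -> Prop) := forall N, exists n, (N <= n)%N /\ P n.

Lemma infinitely_True : infinitely (fun _ => True).
Proof. by move=> N; exists N. Qed.

Lemma infinitely_pigeonhole (B : finType) (f : nat -> B) (P : nat -> Prop) :
  infinitely P -> exists c, infinitely (fun n => P n /\ f n = c).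
Proof.
move=> infP; apply: NNPP => nc.
have [N bound] : exists N, forall c : B, True -> forall n, (N <= n)%N -> ~ (P n /\ f n = c).
  apply: finite_uniform_bound => c _.
  have /not_all_ex_not [M hM] : ~ infinitely (fun n => P n /\ f n = c).
    by move=> infc; apply: nc; exists c.
  by exists M => n Mn Pn; apply: hM; exists n.
have [n [Nn Pn]] := infP N.
exact: bound (f n) I n Nn (conj Pn erefl).
Qed.

Section Compactness.
Local Open Scope ring_scope.
Variables (A : finType) (y : nat -> config A).

Definition agree_on (m : nat) (x x' : config A) :=
  forall i : int, - (m%:Z) <= i <= m%:Z -> x i = x' i.

Let ends (m n : nat) : A * A := (y n (- (m%:Z)), y n (m%:Z)).

(* König's lemma: [nested m] is an infinite set of indices [n], decreasing in
   [m], such that all [y n] with [n] in [nested m] coincide on (-m, m). *)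
Fixpoint nested (m : nat) : {P : nat -> Prop | infinitely P} :=
  match m with
  | 0%N => exist _ (fun _ => True) infinitely_True
  | m'.+1 => let c := constructive_indefinite_description _
                 (infinitely_pigeonhole (ends m') (proj2_sig (nested m'))) in
      exist _ (fun n => proj1_sig (nested m') n /\ ends m' n = proj1_sig c) (proj2_sig c)
  end.

Let ends_lim (m : nat) := proj1_sig (constructive_indefinite_description _
  (infinitely_pigeonhole (ends m) (proj2_sig (nested m)))).

Let nestedS m n : proj1_sig (nested m.+1) n -> proj1_sig (nested m) n /\ ends m n = ends_lim m.
Proof. by []. Qed.

Let nested_le m k n : (k <= m)%N -> proj1_sig (nested m) n -> proj1_sig (nested k) n.
Proof.
elim: m => [|m IH]; first by rewrite leqn0 => /eqP ->.
by rewrite leq_eqVlt ltnS => /orP[/eqP -> //|km /nestedS[/(IH km)]].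
Qed.

Let z (i : int) : A := if 0 <= i then (ends_lim `|i|%N).2 else (ends_lim `|i|%N).1.

Let nested_agree m n : proj1_sig (nested m.+1) n -> agree_on m (y n) z.
Proof.
move=> nmn i im; have ik : (`|i|.+1 <= m.+1)%N by move: im; clear; lia.
rewrite /z; have [_ <-] := nestedS (nested_le ik nmn).
by rewrite /ends; case: ifP => i0 /=; congr y; move: i0; clear; lia.
Qed.

Lemma compactness : exists z : config A, forall m : nat, exists n, (m <= n)%N /\ agree_on m (y n) z.
Proof.
exists z => m; have [n [mn nmn]] := proj2_sig (nested m.+1) m.
by exists n; split => //; apply: nested_agree.
Qed.

End Compactness.

Section Minimal.
Local Open Scope ring_scope.
Variables (A : finType) (X : config A -> Prop).
Hypothesis minX : minimal_shift X.

Let X_closed : closed_set X. Proof. by case: minX => -[]. Qed.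
Let X_shift_invariant : shift_invariant X. Proof. by case: minX => -[]. Qed.

Lemma shift_nat_invariant y (n : nat) : X (fun i => y (i + n%:Z)) <-> X y.
Proof.
elim: n => [|n IH].
  by have -> : (fun i => y (i + 0%:Z)) = y by apply: functional_extensionality => i; rewrite addr0.
rewrite -IH (X_shift_invariant (fun i => y (i + n%:Z))); have -> // : shift (fun i => y (i + n%:Z)) = fun i => y (i + n.+1%:Z).
by apply: functional_extensionality => i; rewrite /shift; congr y; lia.
Qed.

Lemma shift_int_invariant y (t : int) : X y -> X (fun i => y (i + t)).
Proof.
case: t => n Xy; first exact/shift_nat_invariant.
apply/(shift_nat_invariant _ n.+1); suff -> : (fun i => y (i + n.+1%:Z + Negz n)) = y by [].
by apply: functional_extensionality => i; congr y; lia.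
Qed.

Definition omega_limit (y x : config A) :=
  forall m N : nat, exists n, (N <= n)%N /\ agree_on m (fun i => y (i + n%:Z)) x.

Lemma omega_limit_closed y : closed_set (omega_limit y).
Proof.
move=> x near_x m N; have [x' [ox' x'x]] := near_x m.
have [n [Nn yx']] := ox' m N; exists n; split => // i im.
by rewrite yx' // x'x.
Qed.

Lemma omega_limit_shift_invariant y : shift_invariant (omega_limit y).
Proof.
move=> x; split => ox m N.
  have [n [Nn yx]] := ox m.+1 N; exists n.+1; split; first exact: leqW.
  by move=> i im; rewrite /shift -yx; [congr y | move: im]; lia.
have [n [Nn yx]] := ox m.+1 N.+1; exists n.-1; split; first by move: Nn; clear; lia.
move=> i im; have := yx (i - 1); rewrite /shift subrK => <-; last by move: im; clear; lia.
by congr y; move: Nn; clear; lia.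
Qed.

Lemma omega_limit_sub y : X y -> forall x, omega_limit y x -> X x.
Proof.
move=> Xy x ox; apply: X_closed => m; have [n [_ yx]] := ox m 0%N.
by exists (fun i => y (i + n%:Z)); split; [apply: shift_int_invariant|].
Qed.

Lemma omega_limit_nonempty y : exists x, omega_limit y x.
Proof.
have [x near_x] := compactness (fun n i => y (i + n%:Z)).
exists x => m N; have [n [mNn yx]] := near_x (maxn m N).
exists n; split; first by move: mNn; clear; lia.
by move=> i im; apply: yx; move: im; clear; lia.
Qed.

Lemma minimal_omega_limit y x : X y -> X x -> omega_limit y x.
Proof.
move=> Xy; case: minX => _; apply; [exact: omega_limit_nonempty | exact: omega_limit_closed |
  exact: omega_limit_shift_invariant | exact: omega_limit_sub].
Qed.

Lemma lang_occurs_after y w (t : int) : X y -> lang X w ->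
  exists i, t < i /\ window y i (size w) = w.
Proof.
move=> Xy [x [Xx [j wj]]].
have [n [tn yx]] := minimal_omega_limit Xy Xx (`|j| + size w)%N (`|t - j| + 1)%N.
exists (j + n%:Z); split; first by move: tn; clear; lia.
rewrite -[RHS]wj; apply: eq_window => k kw; rewrite -yx; first by congr y; lia.
by move: kw; clear; lia.
Qed.

End Minimal.

Section ForcedContinuation.
Local Open Scope ring_scope.
Variables (A : finType) (X : config A -> Prop).
Hypothesis minX : minimal_shift X.
Variables (a b : A) (u : nat -> A).
Hypothesis neq_ab : a <> b.
Hypothesis a_prefixes : forall n, lang X (a :: mkseq u n).
Hypothesis b_forces : forall n e, lang X (b :: rcons (mkseq u n) e) -> e = u n.

Let letter_b : lang X [:: b]. Proof. by case: minX => -[]. Qed.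

Lemma forced_window y j : X y -> y j = b -> forall n, window y (j + 1) n = mkseq u n.
Proof.
move=> Xy yj; elim=> [//|n IH]; rewrite window_rcons mkseqS IH; congr rcons.
by apply: b_forces; have := lang_window j n.+2 Xy; rewrite window_cons window_rcons yj IH.
Qed.

Lemma forced_tail y j : X y -> y j = b -> forall k : nat, y (j + 1 + k%:Z) = u k.
Proof.
move=> Xy yj k; have := congr1 (nth a ^~ k) (forced_window Xy yj k.+1).
by rewrite nth_window // nth_mkseq.
Qed.

(* Two occurrences of [b] at distance [p] make [u] [p]-periodic with [u (p-1) = b];
   an occurrence of [a :: mkseq u p] inside the periodic part then forces [a = b]. *)
Lemma forced_continuation_absurd : False.
Proof.
have [x [Xx [i0 [/= xi0]]]] := letter_b; rewrite addr0 in xi0.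
have [j [i0j [/= xj]]] := lang_occurs_after minX i0 Xx letter_b; rewrite addr0 in xj.
pose p := `|j - i0|%N.
have p_gt0 : (0 < p)%N by rewrite /p; move: i0j; clear; lia.
have tail k : x (i0 + 1 + k%:Z) = u k by apply: forced_tail.
have u_periodic k : u (k + p) = u k.
  by rewrite -tail -(forced_tail Xx xj); congr x; rewrite /p; move: i0j; clear; lia.
have u_b : u p.-1 = b by rewrite -tail -xj; congr x; rewrite /p; move: i0j; clear; lia.
have [s [i0s sW]] := lang_occurs_after minX i0 Xx (a_prefixes p).
rewrite /= size_mkseq in sW.
have xs : x s = a by have := congr1 (nth a ^~ 0%N) sW; rewrite nth_window // addr0.
have xsp : x (s + p%:Z) = b.
  have := congr1 (nth a ^~ p) sW; rewrite nth_window // => ->.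
  by rewrite -(prednK p_gt0) /= nth_mkseq.
apply: neq_ab; rewrite -xs -xsp.
pose k := absz (s - i0 - 1 : int).
have sk : s = i0 + 1 + k%:Z :> int by rewrite /k; move: i0s; clear; lia.
have spk : s + p%:Z = i0 + 1 + (k + p)%N%:Z :> int by rewrite sk PoszD addrA.
by rewrite spk sk !tail u_periodic.
Qed.

End ForcedContinuation.

Section LeftSpecial.
Variables (A : finType) (X : config A -> Prop) (leL leR : rel A).
Hypotheses (totL : total_order leL) (totR : total_order leR).
Hypotheses (minX : minimal_shift X) (dendX : dendric X) (planX : planar X leL leR).

Let letters : forall a, lang X [:: a]. Proof. by case: minX => -[]. Qed.

Lemma three_EL_bounded a b c : consecutive leL a b -> strict leL a b -> strict leL b c ->
  exists N, forall n, (N <= n)%N -> forall w, size w = n -> ~ [/\ EL X w a, EL X w b & EL X w c].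
Proof.
move=> cab ab bc; apply: NNPP => unbounded.
have long n : exists w, (n <= size w)%N /\ [/\ EL X w a, EL X w b & EL X w c].
  apply: NNPP => nw; apply: unbounded; exists n => m nm w wm wabc.
  by apply: nw; exists w; rewrite wm.
have [u uuniq] := consecutive_joint_EL_word totL totR dendX planX letters cab.
have u_c n : EL X (mkseq u n) c.
  have [w [nw [wa wb wc]]] := long n.
  rewrite -((proj2 (uuniq n)) (take n w)); first exact: EL_take.
  by split; [rewrite size_takel | split; apply: EL_take].
have u_E2 d n : EL X (mkseq u n.+1) d -> E2 X (mkseq u n) d (u n) by rewrite mkseqS.
have u_a n : E2 X (mkseq u n) a (u n) by apply: u_E2; case: (uuniq n.+1) => -[_ [ua _]] _.
apply: (@forced_continuation_absurd _ _ minX a b u (strict_neq ab)) => [n|n e be].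
  by case: (uuniq n) => -[_ [ua _]] _.
have {}be : E2 X (mkseq u n) b e := be.
apply: (le_anti totR); first exact: (planarE planX be (u_E2 _ _ (u_c n.+1)) bc).
exact: (planarE planX (u_a n) be ab).
Qed.

Lemma left_special_least_pair w : lang X w -> left_special X w ->
  exists m d, [/\ consecutive leL m d, strict leL m d, EL X w m, EL X w d &
    forall c, EL X w c -> [\/ c = m, c = d | strict leL d c]].
Proof.
move=> lw [x [y [nxy [wx wy]]]].
have [m [wm m_min]] := exists_le_min totL wx.
have [d [[wd ndm] d_min]] : exists d, (EL X w d /\ d <> m) /\
    forall z, EL X w z /\ z <> m -> leL d z.
  have [z0 wz0] : exists z0, EL X w z0 /\ z0 <> m.
    case: (classic (x = m)) => [exm|nxm]; last by exists x.
    by exists y; split => // eym; apply: nxy; rewrite exm eym.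
  exact: (@exists_le_min _ _ totL (fun z => EL X w z /\ z <> m) _ wz0).
have md : strict leL m d by apply/strictP; split; [exact: m_min|move=> emd; apply: ndm].
exists m, d; split => // [|c wc]; last first.
  case: (classic (c = m)) => [|ncm]; first by constructor 1.
  by have [dc|->] := strict_or_eq (d_min c (conj wc ncm)); [constructor 3|constructor 2].
split=> [emd|c]; first by apply: ndm.
split => /andP[h1 h2].
  have wc := EL_interval totR planX letters lw wm wd h1 h2.
  have dc : leL d c by apply: d_min; split => // ecm; apply: (strict_neq h1).
  exact: strict_neq (strict_le_trans totL h2 dc) erefl.
exact: strict_neq (strict_le_trans totL (strict_le_trans totL h1 (strict_le h2)) (m_min d wd)) erefl.
Qed.

Lemma long_left_special_EL : exists N, forall w, lang X w -> left_special X w -> (N <= size w)%N ->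
  exists a b, consecutive leL a b /\ (forall c, EL X w c <-> c = a \/ c = b).
Proof.
have [N bound] := finite_uniform_bound
  (P := fun t : A * A * A => [/\ consecutive leL t.1.1 t.1.2, strict leL t.1.1 t.1.2 & strict leL t.1.2 t.2])
  (Q := fun t n => forall w, size w = n -> ~ [/\ EL X w t.1.1, EL X w t.1.2 & EL X w t.2])
  (fun t '(And3 c12 s12 s23) => three_EL_bounded c12 s12 s23).
exists N => w lw lsw Nw; have [m [d [cmd md wm wd wc]]] := left_special_least_pair lw lsw.
exists m, d; split => // c; split => [wc'|[]->//].
case: (wc c wc') => [|->|dc]; [by left|by right|].
by case: (bound (m, d, c) (And3 cmd md dc) _ Nw w erefl (And3 wm wd wc')).
Qed.

Lemma unique_left_special a b : consecutive leL a b -> forall n,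
  exists w, (size w = n /\ lang X w /\ left_special X w /\ EL X w a /\ EL X w b) /\
    forall w', size w' = n /\ lang X w' /\ left_special X w' /\ EL X w' a /\ EL X w' b -> w' = w.
Proof.
move=> cab n; have [w [[wn [wa wb]] wuniq]] :=
  consecutive_joint_EL_unique totL totR dendX planX letters cab n.
exists w; split; first by do !split => //; [exact: EL_lang wa | exists a, b; case: cab].
by move=> w' [w'n [_ [_ [w'a w'b]]]]; apply: wuniq.
Qed.

End LeftSpecial.

Lemma g_tree_involution (T : eqType) (V V' : T -> Prop) (adj adj' : T -> T -> Prop) (f : T -> T) :
  involutive f -> (forall v, V' v <-> V (f v)) ->
  (forall u v, adj' u v <-> adj (f u) (f v)) -> g_tree V adj -> g_tree V' adj'.
Proof.
move=> fK V'E adj'E [[v0 Vv0] [conn nocycle]]; have finj := inv_inj fK.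
split; first by exists (f v0); apply/V'E; rewrite fK.
split=> [u v /V'E Vu /V'E Vv|[v [c [c3 cuniq cadj]]]].
  have [p [lastp adjp]] := conn _ _ Vu Vv; exists (map f p); split.
    by rewrite -{1}(fK u) last_map lastp fK.
  move=> i; rewrite size_map => ip; apply/adj'E.
  have -> : u :: map f p = map f (f u :: p) by rewrite /= fK.
  rewrite -{2}(fK u) !(nth_map (f u)) ?fK //=; first exact: adjp.
  exact: ltnW.
apply: nocycle; exists (f v), (map f c); split.
- by rewrite /= size_map.
- by rewrite -map_cons map_inj_uniq.
move=> i; rewrite /= size_map => ic.
have icS : (i.+1 %% (size c).+1 < (size c).+1)%N by rewrite ltn_mod.
by have /adj'E := cadj i ic; rewrite -map_cons !(nth_map v).
Qed.

Section Mirror.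
Local Open Scope ring_scope.
Variables (A : finType) (X : config A -> Prop).

Definition mirror (x : config A) : config A := fun i => x (- i).

Definition mirror_set (Y : config A -> Prop) := fun x => Y (mirror x).

Lemma mirrorK : involutive mirror.
Proof. by move=> x; apply: functional_extensionality => i; rewrite /mirror opprK. Qed.

Lemma window_mirror y i m : window (mirror y) i m = rev (window y (- (i + m%:Z - 1)) m).
Proof.
apply: (@eq_from_nth _ (y 0)); rewrite ?size_rev ?size_window // => k km.
rewrite nth_rev ?size_window // !nth_window //; last by move: km; clear; lia.
by rewrite /mirror; congr y; move: km; clear; lia.
Qed.

Lemma lang_mirror w : lang (mirror_set X) w <-> lang X (rev w).
Proof.
split=> [[y [Xy [i <-]]]|[x [Xx [j wj]]]].
  by rewrite -[y]mirrorK window_mirror revK; apply: lang_window.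
exists (mirror x); split; first by rewrite /mirror_set mirrorK.
exists (- j - (size w)%:Z + 1); rewrite window_mirror -[RHS]revK -wj size_rev.
by congr (rev (window x _ _)); lia.
Qed.

Lemma EL_mirror w a : EL (mirror_set X) w a <-> ER X (rev w) a.
Proof. by rewrite /EL /ER lang_mirror rev_cons. Qed.

Lemma ER_mirror w a : ER (mirror_set X) w a <-> EL X (rev w) a.
Proof. by rewrite /EL /ER lang_mirror rev_rcons. Qed.

Lemma E2_mirror w a b : E2 (mirror_set X) w a b <-> E2 X (rev w) b a.
Proof. by rewrite /E2 lang_mirror rev_cons rev_rcons. Qed.

Lemma left_special_mirror w : left_special (mirror_set X) w <-> right_special X (rev w).
Proof. by split=> -[a [b [nab [wa wb]]]]; exists a, b; rewrite !EL_mirror in wa wb *. Qed.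

Lemma closed_mirror Y : closed_set Y -> closed_set (mirror_set Y).
Proof.
move=> Ycl x near_x; apply: Ycl => n; have [y [Yy yx]] := near_x n.
by exists (mirror y); split => // i ni; rewrite /mirror yx //; move: ni; clear; lia.
Qed.

Lemma shift_invariant_mirror Y : shift_invariant Y -> shift_invariant (mirror_set Y).
Proof.
move=> Yinv x; rewrite /mirror_set (Yinv (mirror (shift x))).
suff -> : shift (mirror (shift x)) = mirror x by [].
by apply: functional_extensionality => i; rewrite /shift /mirror; congr x; lia.
Qed.

Lemma minimal_mirror : minimal_shift X -> minimal_shift (mirror_set X).
Proof.
move=> [[[x0 Xx0] Xcl Xinv letters] Xmin]; split.
  split=> [|||a]; first by exists (mirror x0); rewrite /mirror_set mirrorK.
  - exact: closed_mirror.
  - exact: shift_invariant_mirror.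
  - exact/lang_mirror/letters.
move=> Y [y0 Yy0] Ycl Yinv YX y Xy.
have Ym_y0 : mirror_set Y (mirror y0) by rewrite /mirror_set mirrorK.
have YmX x : mirror_set Y x -> X x by move/YX; rewrite /mirror_set mirrorK.
have := Xmin _ (ex_intro _ _ Ym_y0) (closed_mirror Ycl) (shift_invariant_mirror Yinv) YmX _ Xy.
by rewrite /mirror_set mirrorK.
Qed.

Definition swap_side (v : A + A) : A + A :=
  match v with inl a => inr a | inr b => inl b end.

Lemma dendric_mirror : dendric X -> dendric (mirror_set X).
Proof.
move=> dX w /lang_mirror lw; apply: (g_tree_involution (f := swap_side) _ _ _ (dX _ lw)).
- by case.
- by case=> a /=; [apply: EL_mirror | apply: ER_mirror].
- by case=> a [] b /=; try apply: E2_mirror.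
Qed.

Lemma planar_mirror leL leR : total_order leL -> total_order leR ->
  planar X leL leR -> planar (mirror_set X) leR leL.
Proof.
move=> totL totR planX w _ a1 b1 a2 b2 /E2_mirror w1 /E2_mirror w2 a12.
apply: NNPP => /(not_le_strict totL) b21.
by apply: (strict_neq a12); apply: (le_anti totR (strict_le a12) (planarE planX w2 w1 b21)).
Qed.

End Mirror.

Section RightSpecial.
Variables (A : finType) (X : config A -> Prop) (leL leR : rel A).
Hypotheses (totL : total_order leL) (totR : total_order leR).
Hypotheses (minX : minimal_shift X) (dendX : dendric X) (planX : planar X leL leR).

Let minXm := minimal_mirror minX.
Let dendXm := dendric_mirror dendX.
Let planXm := planar_mirror totL totR planX.

Lemma long_right_special_ER : exists N, forall w, lang X w -> right_special X w -> (N <= size w)%N ->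
  exists a b, consecutive leR a b /\ (forall c, ER X w c <-> c = a \/ c = b).
Proof.
have [N bound] := long_left_special_EL totR totL minXm dendXm planXm.
exists N => w lw rsw Nw; have [|||a [b [cab wc]]] := bound (rev w).
- by rewrite lang_mirror revK.
- by rewrite left_special_mirror revK.
- by rewrite size_rev.
by exists a, b; split => // c; rewrite -wc EL_mirror revK.
Qed.

Lemma unique_right_special a b : consecutive leR a b -> forall n,
  exists w, (size w = n /\ lang X w /\ right_special X w /\ ER X w a /\ ER X w b) /\
    forall w', size w' = n /\ lang X w' /\ right_special X w' /\ ER X w' a /\ ER X w' b -> w' = w.
Proof.
have mirrorE w n : (size w = n /\ lang (mirror_set X) w /\ left_special (mirror_set X) w /\
    EL (mirror_set X) w a /\ EL (mirror_set X) w b) <->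
  (size (rev w) = n /\ lang X (rev w) /\ right_special X (rev w) /\ ER X (rev w) a /\ ER X (rev w) b).
  by rewrite size_rev lang_mirror left_special_mirror !EL_mirror.
move=> cab n; have [w [/mirrorE wP wuniq]] := unique_left_special totR totL minXm dendXm planXm cab n.
exists (rev w); split => // w' w'P; rewrite -(revK w') (wuniq (rev w')) //.
by apply/mirrorE; rewrite revK.
Qed.

End RightSpecial.

Theorem mainTheorem17 (A : finType) (X : config A -> Prop) (leL leR : rel A) :
  total_order leL -> total_order leR ->
  minimal_shift X -> dendric X -> planar X leL leR ->
  (* (1) *)
  ((exists N : nat, forall w : seq A, lang X w -> left_special X w -> (N <= size w)%N ->
      exists a b, consecutive leL a b /\ (forall c, EL X w c <-> c = a \/ c = b))
   /\
   (forall a b : A, consecutive leL a b -> forall n : nat,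
      exists w : seq A,
        (size w = n /\ lang X w /\ left_special X w /\ EL X w a /\ EL X w b) /\
        forall w' : seq A,
          size w' = n /\ lang X w' /\ left_special X w' /\ EL X w' a /\ EL X w' b ->
          w' = w))
  /\
  (* (2) *)
  ((exists N : nat, forall w : seq A, lang X w -> right_special X w -> (N <= size w)%N ->
      exists a b, consecutive leR a b /\ (forall c, ER X w c <-> c = a \/ c = b))
   /\
   (forall a b : A, consecutive leR a b -> forall n : nat,
      exists w : seq A,
        (size w = n /\ lang X w /\ right_special X w /\ ER X w a /\ ER X w b) /\
        forall w' : seq A,
          size w' = n /\ lang X w' /\ right_special X w' /\ ER X w' a /\ ER X w' b ->
          w' = w)).
Proof.
move=> totL totR minX dendX planX; split; split.
- exact: long_left_special_EL planX.
- exact: unique_left_special planX.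
- exact: long_right_special_ER planX.
- exact: unique_right_special planX.
Qed.
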